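(* Let $n\ge2$. For $j\le m$ let $P_j^m$ denote the joint distribution of $(\tau_1^m,\dots,\tau_j^m)$. Then the law $P_{n-1}^n$ of $(\tau_1^n,\dots,\tau_{n-1}^n)$ has, with respect to the law $P_{n-1}^{n-1}$ of $(\tau_1^{n-1},\dots,\tau_{n-1}^{n-1})$, the density \[ \frac{P_{n-1}^n(t_1,\dots,t_{n-1})}{P_{n-1}^{n-1}(t_1,\dots,t_{n-1})} = K_n\Big(1-\frac1n\Big)^{(n-1)\big(\frac{1}{n-1}\sum_{i=1}^{n-1}(t_i-\log(n-1))\big)}, \] for $(t_1,\dots,t_{n-1})$ in the support of $P_{n-1}^{n-1}$.
   Context: For $m\ge1$, $\tau_1^m,\dots,\tau_m^m$ are independent with $\tau_i^m\sim\operatorname{Geom}\big(\frac{m-i+1}{m}\big)$, where $\operatorname{Geom}(p)$ is the geometric law on $\{1,2,\dots\}$, $P(k)=p(1-p)^{k-1}$ (with $0^0=1$). $K_n=n\big(1-\frac1n\big)^{(n-1)\log(n-1)}$. *)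

From Stdlib Require Import Reals.
Open Scope R_scope.

(* Geometric law on {1,2,...}: P(k) = p (1-p)^(k-1), P(0) = 0; 0^0 = 1 via pow. *)
Definition geom_pmf (p : R) (k : nat) : R :=
  match k with
  | O => 0
  | S k' => p * (1 - p) ^ k'
  end.

(* Parameter of tau_i^m : (m - i + 1)/m  (1-indexed i). *)
Definition tau_param (m i : nat) : R := INR (m + 1 - i) / INR m.

Fixpoint prod1 (j : nat) (f : nat -> R) : R :=
  match j with
  | O => 1
  | S j' => prod1 j' f * f (S j')
  end.

Fixpoint sum1 (j : nat) (f : nat -> R) : R :=
  match j with
  | O => 0
  | S j' => sum1 j' f + f (S j')
  end.

(* P_j^m(t_1,...,t_j): joint pmf of (tau_1^m,...,tau_j^m) (independent),
   t given as a function nat -> nat, only values t 1 .. t j are used. *)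
Definition Pjoint (m j : nat) (t : nat -> nat) : R :=
  prod1 j (fun i => geom_pmf (tau_param m i) (t i)).

Definition Kn (n : nat) : R :=
  INR n * Rpower (1 - 1 / INR n) (INR (n - 1) * ln (INR (n - 1))).

(** Write [a = 1 - 1/n].  Passing from [m = n - 1] to [m = n] multiplies the
    complement [1 - p] of every geometric parameter [p = (m - i + 1)/m] by the
    same factor [a], so each factor of the joint pmf changes by [a ^ t_i] times
    a ratio of parameters, and these ratios telescope to [n].  Hence
    [P_{n-1}^n / P_{n-1}^{n-1} = n a^(t_1 + ... + t_{n-1})], which is the
    claimed density after splitting off [K_n]. *)

From Stdlib Require Import Reals Lra Lia.
Open Scope R_scope.

Lemma prod1_ext (j : nat) (f g : nat -> R) :
  (forall i, (1 <= i <= j)%nat -> f i = g i) -> prod1 j f = prod1 j g.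
Proof.
  induction j as [|j IH]; intros Hfg; simpl; [reflexivity|].
  rewrite (Hfg (S j)), IH; [reflexivity| |lia].
  intros i Hi; apply Hfg; lia.
Qed.

Lemma prod1_mul (j : nat) (f g : nat -> R) :
  prod1 j (fun i => f i * g i) = prod1 j f * prod1 j g.
Proof. induction j as [|j IH]; simpl; [ring|rewrite IH; ring]. Qed.

Lemma prod1_Rpower (c : R) (f : nat -> R) (j : nat) :
  prod1 j (fun i => Rpower c (f i)) = Rpower c (sum1 j f).
Proof.
  induction j as [|j IH]; simpl.
  - unfold Rpower; rewrite Rmult_0_l, exp_0; reflexivity.
  - rewrite IH, Rpower_plus; reflexivity.
Qed.

Lemma prod1_telescope (g : nat -> R) (j : nat) :
  (forall i, (i <= j)%nat -> g i <> 0) ->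
  prod1 j (fun i => g (pred i) / g i) = g O / g j.
Proof.
  induction j as [|j IH]; intros Hg; simpl.
  - field; apply Hg; lia.
  - rewrite IH by (intros; apply Hg; lia).
    field; split; apply Hg; lia.
Qed.

Lemma sum1_sub_const (f : nat -> R) (c : R) (j : nat) :
  sum1 j (fun i => f i - c) = sum1 j f - INR j * c.
Proof.
  induction j as [|j IH]; simpl sum1; [simpl; ring|].
  rewrite IH, S_INR; ring.
Qed.

Lemma geom_pmf_compl_scale (p q c : R) (k : nat) :
  1 - q = c * (1 - p) -> c * p * geom_pmf q k = q * c ^ k * geom_pmf p k.
Proof.
  intros Hqp; destruct k as [|k]; simpl; [ring|].
  rewrite Hqp, Rpow_mult_distr; ring.
Qed.

Lemma tau_param_succ_compl (N i : nat) :
  (1 <= N)%nat -> (i <= S N)%nat ->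
  1 - tau_param (S N) i = (1 - 1 / INR (S N)) * (1 - tau_param N i).
Proof.
  intros HN Hi.
  assert (1 <= INR N) by (apply (le_INR 1); lia).
  unfold tau_param.
  rewrite !minus_INR, !plus_INR, !S_INR by lia; simpl (INR 1).
  field; lra.
Qed.

Lemma geom_pmf_tau_param_succ (N i k : nat) :
  (1 <= N)%nat -> (1 <= i <= N)%nat ->
  geom_pmf (tau_param (S N) i) k =
  (INR N + 1 - INR (pred i)) / (INR N + 1 - INR i) *
  Rpower (1 - 1 / INR (S N)) (INR k) * geom_pmf (tau_param N i) k.
Proof.
  intros HN Hi.
  assert (1 <= INR N) by (apply (le_INR 1); lia).
  assert (INR i <= INR N) by (apply le_INR; lia).
  assert (Hpred : INR (pred i) = INR i - 1).
  { replace i with (S (pred i)) at 2 by lia; rewrite S_INR; ring. }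
  assert (Htau : tau_param N i = (INR N + 1 - INR i) / INR N).
  { unfold tau_param; rewrite minus_INR, plus_INR by lia; reflexivity. }
  set (a := 1 - 1 / INR (S N)).
  assert (Ha : a = INR N / (INR N + 1)).
  { unfold a; rewrite S_INR; field; lra. }
  set (r := (INR N + 1 - INR (pred i)) / (INR N + 1 - INR i)).
  assert (Hratio : tau_param (S N) i = a * tau_param N i * r).
  { rewrite Ha, Htau; unfold r, tau_param.
    rewrite Hpred, minus_INR, !plus_INR, S_INR by lia; simpl (INR 1).
    field; lra. }
  assert (Hscale := geom_pmf_compl_scale (tau_param N i) (tau_param (S N) i) a k
                      (tau_param_succ_compl N i HN ltac:(lia))).
  assert (Ha_pos : 0 < a) by (rewrite Ha; apply Rdiv_lt_0_compat; lra).
  assert (Htau_pos : 0 < tau_param N i)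
    by (rewrite Htau; apply Rdiv_lt_0_compat; lra).
  rewrite Rpower_pow by exact Ha_pos.
  apply (Rmult_eq_reg_l (a * tau_param N i)); [|nra].
  rewrite Hscale, Hratio; ring.
Qed.

Lemma Pjoint_succ (N : nat) (t : nat -> nat) :
  (1 <= N)%nat ->
  Pjoint (S N) N t =
  INR (S N) * Rpower (1 - 1 / INR (S N)) (sum1 N (fun i => INR (t i))) *
  Pjoint N N t.
Proof.
  intros HN; unfold Pjoint.
  rewrite (prod1_ext N _ _ (fun i Hi => geom_pmf_tau_param_succ N i (t i) HN Hi)).
  rewrite !prod1_mul, prod1_Rpower.
  rewrite (prod1_telescope (fun i => INR N + 1 - INR i)).
  - rewrite S_INR, INR_0; field; lra.
  - intros i Hi; apply le_INR in Hi; lra.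
Qed.

Theorem lemma3p6 (n : nat) (t : nat -> nat) :
  (2 <= n)%nat ->
  0 < Pjoint (n - 1) (n - 1) t ->
  Pjoint n (n - 1) t / Pjoint (n - 1) (n - 1) t =
  Kn n * Rpower (1 - 1 / INR n)
    (INR (n - 1) *
     (1 / INR (n - 1) * sum1 (n - 1) (fun i => INR (t i) - ln (INR (n - 1))))).
Proof.
  intros Hn Hpos.
  destruct n as [|N]; [lia|].
  replace (S N - 1)%nat with N in * by lia.
  assert (1 <= INR N) by (apply (le_INR 1); lia).
  unfold Kn; replace (S N - 1)%nat with N by lia.
  rewrite Pjoint_succ, sum1_sub_const by lia.
  set (S_t := sum1 N (fun i => INR (t i))).
  replace (INR N * (1 / INR N * (S_t - INR N * ln (INR N))))
    with (S_t - INR N * ln (INR N)) by (field; lra).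
  rewrite (Rmult_assoc _ (Rpower _ (INR N * ln (INR N)))), <- Rpower_plus.
  replace (INR N * ln (INR N) + (S_t - INR N * ln (INR N))) with S_t by ring.
  field; lra.
Qed.
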